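(* Let $k$ be a field, $R=k[x_1,\ldots,x_n]$, $n\ge2$, and let $I$ be an almost reverse lexicographic ideal whose last generator $M_\omega$ satisfies $\max M_\omega=n$. Let $0\in\mathbb{Z}^{n-2}$ be the zero tuple (so $f_{n-1}(0)=\min\{t: x_{n-1}^t\in I\}$). Then: (1) for every $d\ge f_{n-1}(0)$, $H(R/I,d-1)-H(R/I,d)=|\{M\in\mathcal{G}(I):\max M=n,\ \deg M=d\}|$; in particular $H(R/I,d)\le H(R/I,d-1)$ for $d\ge f_{n-1}(0)$; (2) $H(R/I,d)>H(R/I,d-1)$ for every $d<f_{n-1}(0)$; (3) $f_{n-1}(0)=\min\{d: H(R/I,d)\le H(R/I,d-1)\}$; (4) $H(R/I+(x_n),d)=\max\{0,H(R/I,d)-H(R/I,d-1)\}$ for every $d$.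
   Context: $H(A,d)=\dim_k A_d$ is the Hilbert function of a graded quotient $A$ of $R$ (with $H(A,d)=0$ for $d<0$). Monomial order: degree reverse lexicographic: for $M=x^\alpha,N=x^\beta$, $M>N$ iff $\deg M>\deg N$, or degrees are equal and for the largest $s$ with $\alpha_s\neq\beta_s$ one has $\alpha_s<\beta_s$. A monomial ideal $I$ is almost reverse lexicographic if for every monomial $M$ and every minimal monomial generator $N$ of $I$ with $\deg M=\deg N$ and $M>N$, $M\in I$. $\mathcal{G}(I)$ is the minimal monomial generating set; $\max M$ is the largest $i$ with $x_i\mid M$. The last generator $M_\omega$ is the element of $\mathcal{G}(I)$ of maximal degree that is smallest in the order among elements of $\mathcal{G}(I)$ of that degree. *)

(* Monomial ideals of k[x_1..x_n] are represented by their sets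
   of monomials (exponent vectors). *)
From HB Require Import structures.
From mathcomp Require Import all_boot all_order all_algebra.
From mathcomp Require Import boolp.
Set Implicit Arguments. Unset Strict Implicit. Unset Printing Implicit Defensive.

(* monomial x^alpha of k[x_1,...,x_n]; variable x_{i+1} has index i : 'I_n *)
Definition mon (n : nat) := {ffun 'I_n -> nat}.

Definition mdeg n (m : mon n) : nat := \sum_(i < n) m i.

Definition mdvd n (a b : mon n) : Prop := forall i, a i <= b i.

Definition is_monomial_ideal n (I : mon n -> Prop) : Prop :=
  forall a b, I a -> mdvd a b -> I b.

Definition mingen n (I : mon n -> Prop) (M : mon n) : Prop :=
  I M /\ forall N, I N -> mdvd N M -> N = M.

Definition revlex_gt n (M N : mon n) : Prop :=
  mdeg N < mdeg M \/
  (mdeg M = mdeg N /\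
   exists s : 'I_n, M s < N s /\ forall t : 'I_n, s < t -> M t = N t).

Definition almost_revlex n (I : mon n -> Prop) : Prop :=
  is_monomial_ideal I /\
  forall M N, mingen I N -> mdeg M = mdeg N -> revlex_gt M N -> I M.

(* max M = largest (1-based) i with x_i | M *)
Definition maxvar n (M : mon n) : nat := \max_(i < n | 0 < M i) i.+1.

Definition last_gen n (I : mon n -> Prop) (Mw : mon n) : Prop :=
  mingen I Mw /\
  (forall N, mingen I N -> mdeg N <= mdeg Mw) /\
  (forall N, mingen I N -> mdeg N = mdeg Mw -> N = Mw \/ revlex_gt N Mw).

Definition of_bounded n d (m : {ffun 'I_n -> 'I_d.+1}) : mon n :=
  [ffun i => val (m i)].

(* number of monomials of degree d satisfying P (all have exponents <= d) *)
Definition count_deg n (P : mon n -> Prop) (d : nat) : nat :=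
  #|[set m : {ffun 'I_n -> 'I_d.+1} |
      (mdeg (of_bounded m) == d) && `[< P (of_bounded m) >]]|.

Definition hilb n (I : mon n -> Prop) (d : int) : int :=
  match d with
  | Posz k => (count_deg (fun m => ~ I m) k)%:Z
  | Negz _ => 0%R
  end.

(* the monomial ideal I + (x_{j+1}) *)
Definition add_var n (I : mon n -> Prop) (j : nat) : mon n -> Prop :=
  fun m => I m \/ exists i : 'I_n, val i = j /\ 0 < m i.

(* x_{j+1}^t *)
Definition xpow n (j t : nat) : mon n := [ffun i : 'I_n => if val i == j then t else 0].

From HB Require Import structures.
From mathcomp Require Import all_boot all_order all_algebra.
From mathcomp Require Import boolp.
From mathcomp Require Import zify.
Import Order.TTheory GRing.Theory Num.Theory.
Set Implicit Arguments. Unset Strict Implicit. Unset Printing Implicit Defensive.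

(* Split the standard monomials of degree d (those outside I) according to
   whether x_n divides them.  Those free of x_n are the standard monomials of
   I + (x_n).  Multiplication by x_n maps the standard monomials m of degree d-1
   onto those of degree d divisible by x_n, except for the m with x_n m in I;
   for an almost revlex ideal these x_n m are exactly the minimal generators of
   degree d involving x_n.  Hence
     H(R/I,d) - H(R/I,d-1) = H(R/(I + (x_n)),d) - #{M in G(I) : max M = n, deg M = d}.
   A minimal generator of degree d involving x_n puts x_{n-1}^d in I, so the
   last term vanishes below f = f_{n-1}(0).  Since x_{n-1}^f is a minimal
   generator, every monomial of degree >= f free of x_n lies in I, so the middle
   term vanishes from f on, while below f it is positive, witnessed by x_{n-1}^d. *)

Section Monomials.
Variable n : nat.
Implicit Types (a b m M N : mon n) (i j : 'I_n).

Lemma leq_coord_mdeg m i : m i <= mdeg m.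
Proof. by rewrite /mdeg (bigD1 i) //= leq_addr. Qed.

Lemma mdvd_trans a b m : mdvd a b -> mdvd b m -> mdvd a m.
Proof. by move=> hab hbm i; apply: leq_trans (hab i) (hbm i). Qed.

Lemma mdvd_mdeg a b : mdvd a b -> mdeg a <= mdeg b.
Proof. by move=> hab; apply: leq_sum => i _; apply: hab. Qed.

Lemma mdvd_mdeg_eq a b : mdvd a b -> mdeg a = mdeg b -> a = b.
Proof.
move=> hab hdeg; have : \sum_(i < n) (b i - a i) == 0.
  by rewrite sumnB // -/(mdeg b) -/(mdeg a) hdeg subnn.
rewrite sum_nat_eq0 => /forallP hsub; apply/ffunP => i.
by apply/eqP; rewrite eqn_leq hab -subn_eq0; exact: hsub.
Qed.

Lemma mingen_exists (I : mon n -> Prop) N :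
  I N -> exists2 N', mingen I N' & mdvd N' N.
Proof.
move=> hN.
have hex : exists k, `[< exists N', [/\ I N', mdvd N' N & mdeg N' = k] >].
  by exists (mdeg N); apply/asboolP; exists N; split.
case: (ex_minnP hex) => _ /asboolP [N' [hN' hdvd <-]] hmin.
exists N' => //; split=> // N'' hN'' hdvd''.
apply: mdvd_mdeg_eq => //; apply/eqP; rewrite eqn_leq mdvd_mdeg //=.
by apply: hmin; apply/asboolP; exists N''; split=> //; apply: mdvd_trans hdvd.
Qed.

Lemma mdvd_neq_coord a b : mdvd a b -> a != b -> exists j, a j < b j.
Proof.
move=> hab hne; apply/existsP; apply: contraNT hne; rewrite negb_exists.
move=> /forallP hge; apply/eqP/ffunP => j.
by apply/eqP; rewrite eqn_leq hab leqNgt hge.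
Qed.

Lemma mdeg_gt0 m : 0 < mdeg m -> exists i, 0 < m i.
Proof.
rewrite lt0n sum_nat_eq0 negb_forall => /existsP [i hi].
by exists i; rewrite lt0n.
Qed.

Definition mulX i m : mon n := [ffun j => m j + (j == i)].
Definition divX i m : mon n := [ffun j => m j - (j == i)].

Lemma mulX_coord i m j : mulX i m j = m j + (j == i).
Proof. by rewrite ffunE. Qed.

Lemma divX_coord i m j : divX i m j = m j - (j == i).
Proof. by rewrite ffunE. Qed.

Lemma mdeg_mulX i m : mdeg (mulX i m) = (mdeg m).+1.
Proof.
rewrite /mdeg (eq_bigr _ (fun j _ => mulX_coord i m j)) big_split /= -addn1.
by congr (_ + _); rewrite (bigD1 i) //= eqxx big1 // => j /negbTE ->.
Qed.

Lemma divXK i m : divX i (mulX i m) = m.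
Proof. by apply/ffunP => j; rewrite divX_coord mulX_coord addnK. Qed.

Lemma mulXK i m : 0 < m i -> mulX i (divX i m) = m.
Proof.
move=> hmi; apply/ffunP => j; rewrite mulX_coord divX_coord.
by case: eqP => [->|_]; rewrite ?subn0 ?addn0 // subnK.
Qed.

Lemma mdeg_divX i m : 0 < m i -> mdeg (divX i m) = (mdeg m).-1.
Proof. by move=> hmi; rewrite -{2}(mulXK hmi) mdeg_mulX. Qed.

Lemma mdvd_mulX i m : mdvd m (mulX i m).
Proof. by move=> j; rewrite mulX_coord leq_addr. Qed.

Lemma mdvd_divX i m : mdvd (divX i m) m.
Proof. by move=> j; rewrite divX_coord leq_subr. Qed.

Lemma mdeg_xpow (j : nat) t : j < n -> mdeg (xpow n j t) = t.
Proof.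
move=> hj; rewrite /mdeg (bigD1 (Ordinal hj)) //= ffunE eqxx big1 ?addn0 //.
by move=> i hi; rewrite ffunE; case: eqP => // hij; case/eqP: hi; apply: val_inj.
Qed.

Lemma mdvd_xpowP (j : nat) t N : j < n -> mdvd N (xpow n j t) -> N = xpow n j (mdeg N).
Proof.
move=> hj hdvd; have hN : N = xpow n j (N (Ordinal hj)).
  apply/ffunP => i; rewrite [RHS]ffunE; case: eqP => [hij|hij].
    by congr (N _); apply: val_inj.
  by apply/eqP; rewrite -leqn0; have := hdvd i; rewrite ffunE; case: eqP.
by rewrite [in mdeg N]hN mdeg_xpow.
Qed.

End Monomials.

Section Counting.
Variable n : nat.
Implicit Types (P Q : mon n -> Prop) (d e : nat).

Definition to_bounded d (m : mon n) : {ffun 'I_n -> 'I_d.+1} :=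
  [ffun i => inord (m i)].

Lemma of_bounded_inj d : injective (@of_bounded n d).
Proof.
move=> a b hab; apply/ffunP => i; apply: val_inj.
by have := congr1 (fun m : mon n => m i) hab; rewrite !ffunE.
Qed.

Lemma to_boundedK d (m : mon n) : mdeg m <= d -> of_bounded (to_bounded d m) = m.
Proof.
move=> hm; apply/ffunP => i; rewrite !ffunE /= inordK //.
by rewrite ltnS (leq_trans (leq_coord_mdeg m i)).
Qed.

Lemma count_deg_bij P Q d e (F : mon n -> mon n) :
  (forall m, mdeg m = d -> P m -> mdeg (F m) = e /\ Q (F m)) ->
  (forall m1 m2, mdeg m1 = d -> mdeg m2 = d -> P m1 -> P m2 -> F m1 = F m2 -> m1 = m2) ->
  (forall M, mdeg M = e -> Q M -> exists2 m, mdeg m = d /\ P m & F m = M) ->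
  count_deg P d = count_deg Q e.
Proof.
move=> hF hinj hsurj; rewrite /count_deg.
set A := [set m | _]; set B := [set m | _].
have inA x : x \in A -> mdeg (of_bounded x) = d /\ P (of_bounded x).
  by rewrite inE => /andP [/eqP -> /asboolP].
have inB M : mdeg M = e -> Q M -> to_bounded e M \in B.
  by move=> hM hQ; rewrite inE to_boundedK ?hM // eqxx; apply/asboolP.
pose f (x : {ffun 'I_n -> 'I_d.+1}) := to_bounded e (F (of_bounded x)).
have fE x : x \in A -> of_bounded (f x) = F (of_bounded x).
  by move=> /inA [hd hP]; rewrite to_boundedK //; case: (hF _ hd hP) => ->.
rewrite -(card_in_imset (f := f)); last first.
  move=> x y /[dup] xA /inA [xd xP] /[dup] yA /inA [yd yP] /(congr1 (@of_bounded _ _)).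
  by rewrite !fE // => /(hinj _ _ xd yd xP yP) /of_bounded_inj.
apply: eq_card => y; apply/imsetP/idP => [[x xA ->] | ].
  by have [xd xP] := inA _ xA; have [Fd FQ] := hF _ xd xP; rewrite /f inB.
rewrite inE => /andP [/eqP yd /asboolP yQ].
have [m [md mP] hFm] := hsurj _ yd yQ.
have mA : to_bounded d m \in A.
  by rewrite inE to_boundedK ?md // eqxx; apply/asboolP.
by exists (to_bounded d m) => //; apply: of_bounded_inj; rewrite fE // to_boundedK ?md.
Qed.

Lemma eq_count_deg P Q d :
  (forall m, mdeg m = d -> (P m <-> Q m)) -> count_deg P d = count_deg Q d.
Proof.
move=> hPQ; apply: (count_deg_bij (F := id)) => // [m hm /(hPQ _ hm)|M hM /(hPQ _ hM)] //.
by exists M.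
Qed.

Lemma count_deg_mulX P d (i : 'I_n) :
  count_deg P d = count_deg (fun M => 0 < M i /\ P (divX i M)) d.+1.
Proof.
apply: (count_deg_bij (F := mulX i)).
- by move=> m hm hP; rewrite mdeg_mulX hm mulX_coord eqxx addn1 divXK.
- by move=> m1 m2 _ _ _ _ /(congr1 (divX i)); rewrite !divXK.
- move=> M hM [hMi hP]; exists (divX i M); last exact: mulXK.
  by rewrite mdeg_divX // hM.
Qed.

Lemma count_deg_split P Q d :
  count_deg P d = count_deg (fun m => P m /\ Q m) d + count_deg (fun m => P m /\ ~ Q m) d.
Proof.
rewrite /count_deg -(cardsID [set m : {ffun 'I_n -> 'I_d.+1} | `[< Q (of_bounded m) >]]).
congr (_ + _); apply: eq_card => x; rewrite !inE; case: (mdeg _ == d); rewrite ?andbF //=;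
  by apply/andP/asboolP => [[/asboolP ? /asboolP ?] | [? ?]] //; split; apply/asboolP.
Qed.

Lemma count_deg_eq0 P d : (forall m, mdeg m = d -> ~ P m) -> count_deg P d = 0.
Proof.
move=> hP; apply/eqP; rewrite cards_eq0; apply/eqP/setP => x; rewrite !inE.
by apply/negbTE/andP => [[/eqP hd /asboolP]]; apply: hP.
Qed.

Lemma count_deg_gt0 P d m : mdeg m = d -> P m -> 0 < count_deg P d.
Proof.
move=> hd hP; rewrite card_gt0; apply/set0Pn; exists (to_bounded d m).
by rewrite inE to_boundedK ?hd // eqxx; apply/asboolP.
Qed.

End Counting.

Lemma maxvar_last n (M : mon n.+1) : (maxvar M == n.+1) = (0 < M ord_max).
Proof.
apply/eqP/idP => [hmax | hlast].
  rewrite lt0n; apply/eqP => hlast0; suff : maxvar M <= n by rewrite hmax ltnn.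
  apply/bigmax_leqP => i hi.
  have hne : i != ord_max by apply: contraTneq hi => ->; rewrite hlast0.
  have := ltn_ord i; rewrite ltnS leq_eqVlt => /orP [/eqP hin|//].
  by case/eqP: hne; apply: val_inj.
apply/eqP; rewrite eqn_leq; apply/andP; split; first by apply/bigmax_leqP => i _.
exact: (leq_bigmax_cond (F := fun i : 'I_n.+1 => i.+1) ord_max hlast).
Qed.

Lemma hilb_neg n (I : mon n -> Prop) (d : int) : (d < 0)%R -> hilb I d = 0%R.
Proof. by case: d. Qed.

Definition ngens_maxvar n (I : mon n -> Prop) (k d : nat) : nat :=
  count_deg (fun M => mingen I M /\ maxvar M = k /\ mdeg M = d) d.

Section AlmostRevlex.
Variable n : nat.
Variable I : mon n.+1 -> Prop.
Hypothesis HI : almost_revlex I.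
Implicit Types (m M N : mon n.+1).

Local Notation xlast := (@ord_max n).

Lemma ideal_mdvd a b : I a -> mdvd a b -> I b.
Proof. by case: HI => hideal _; apply: hideal. Qed.

Lemma mem_revlex_last N M :
  mingen I N -> mdeg M = mdeg N -> M xlast < N xlast -> I M.
Proof.
move=> hN hdeg hlt; case: HI => _ harl; apply: (harl M N hN hdeg); right; split=> //.
exists xlast; split=> // t; rewrite ltnNge => /negP[].
by rewrite -ltnS ltn_ord.
Qed.

Lemma mingen_exchange N j :
  mingen I N -> 0 < N xlast -> I (mulX j (divX xlast N)).
Proof.
move=> hN hlast; case: (eqVneq j xlast) => [->|hj]; first by rewrite mulXK //; case: hN.
apply: (mem_revlex_last hN).
  by rewrite mdeg_mulX mdeg_divX // prednK // (leq_trans hlast) ?leq_coord_mdeg.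
by rewrite mulX_coord divX_coord eqxx eq_sym (negbTE hj); lia.
Qed.

Lemma mingen_lastE M :
  0 < M xlast -> mingen I M <-> I M /\ ~ I (divX xlast M).
Proof.
move=> hlast; split=> [[hM hmin] | [hM hdiv]].
  split=> // /hmin /(_ (mdvd_divX _ _)) /(congr1 (fun m : mon n.+1 => m xlast)).
  by rewrite divX_coord eqxx; lia.
split=> // N hN hNM; have [N' hN' hN'N] := mingen_exists hN.
have hN'M := mdvd_trans hN'N hNM.
suff hN'eq : N' = M.
  apply: mdvd_mdeg_eq => //; apply/eqP; rewrite eqn_leq mdvd_mdeg //=.
  by rewrite -hN'eq mdvd_mdeg.
case: (eqVneq N' M) => // hne; exfalso; apply: hdiv.
have hN'I : I N' by case: hN'.
case: (ltnP (N' xlast) (M xlast)) => hlt.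
  apply: (ideal_mdvd hN'I) => i; rewrite divX_coord.
  by case: eqP => [->|_]; [lia | rewrite subn0].
(* N' has the x_n-degree of M, so its exchange N' x_j / x_n divides M / x_n. *)
have [j hj] := mdvd_neq_coord hN'M hne.
have hjl : j != xlast by apply: contraTneq hj => ->; rewrite -leqNgt.
apply: (ideal_mdvd (mingen_exchange j hN' (leq_trans hlast hlt))) => i.
rewrite mulX_coord !divX_coord; have := hN'M i.
case: (eqVneq i j) => [->|_]; first by rewrite (negbTE hjl); lia.
by case: (eqVneq i xlast) => [->|_]; lia.
Qed.

Lemma count_notin_last d :
  count_deg (fun m => ~ I m) d =
  count_deg (fun m => ~ I m /\ 0 < m xlast) d + count_deg (fun m => ~ add_var I n m) d.
Proof.
rewrite (count_deg_split _ (fun m => 0 < m xlast)); congr (_ + _).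
apply: eq_count_deg => m _; split=> [[hI hl] [//|[i [hi hpos]]] | hadd].
  by apply: hl; rewrite (_ : xlast = i) //; apply: val_inj.
by split=> [hm|hl]; apply: hadd; [left | right; exists xlast].
Qed.

Lemma count_notin_last_succ d :
  count_deg (fun m => ~ I m /\ 0 < m xlast) d.+1 = count_deg (fun m => ~ I (mulX xlast m)) d.
Proof.
rewrite [RHS](count_deg_mulX _ _ xlast); apply: eq_count_deg => m _.
split=> [[hI hl] | [hl hI]]; split=> //; first by rewrite mulXK.
by rewrite mulXK in hI.
Qed.

Lemma count_notin_mulX d :
  count_deg (fun m => ~ I m) d =
  count_deg (fun m => ~ I (mulX xlast m)) d + ngens_maxvar I n.+1 d.+1.
Proof.
rewrite (count_deg_split _ (fun m => I (mulX xlast m))) addnC; congr (_ + _).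
  apply: eq_count_deg => m _; split=> [[] //|hm]; split=> // hI.
  by apply: hm; apply: ideal_mdvd hI (mdvd_mulX _ _).
rewrite /ngens_maxvar (count_deg_mulX _ _ xlast); apply: eq_count_deg => M hM.
split=> [[hl [hdiv hmul]] | [hgen [/eqP hmax _]]].
  rewrite mulXK // in hmul; split; first exact/mingen_lastE.
  by split=> //; apply/eqP; rewrite maxvar_last.
rewrite maxvar_last in hmax; have [hMI hdiv] := (mingen_lastE hmax).1 hgen.
by split=> //; rewrite mulXK.
Qed.

Lemma ngens_maxvar_deg0 : ngens_maxvar I n.+1 0 = 0.
Proof.
apply: count_deg_eq0 => M hM [_ [/eqP]]; rewrite maxvar_last.
by have := leq_coord_mdeg M xlast; rewrite hM leqn0 => /eqP ->.
Qed.

Lemma hilb_step (d : nat) :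
  (hilb I d%:Z - hilb I (d%:Z - 1) =
   hilb (add_var I n) d%:Z - (ngens_maxvar I n.+1 d)%:Z)%R.
Proof.
case: d => [|d].
  have hlast0 : count_deg (fun m => ~ I m /\ 0 < m xlast) 0 = 0.
    apply: count_deg_eq0 => m hm [_]; have := leq_coord_mdeg m xlast.
    by rewrite hm leqn0 => /eqP ->.
  by rewrite [hilb I (_ - 1)]hilb_neg //= ngens_maxvar_deg0 count_notin_last hlast0; lia.
rewrite (_ : (d.+1%:Z - 1 = d%:Z)%R); last by lia.
by rewrite /= count_notin_last count_notin_last_succ count_notin_mulX; lia.
Qed.

End AlmostRevlex.

Section PenultimateVariable.
Variable n : nat.
Variable I : mon n.+2 -> Prop.
Hypothesis HI : almost_revlex I.
Implicit Types (M N : mon n.+2) (d t : nat).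

Local Notation xlast := (@ord_max n.+1).
Local Notation xpenult := (inord n : 'I_n.+2).
Local Notation xpenult_pow t := (xpow n.+2 n t).

Lemma mdeg_xpenult_pow t : mdeg (xpenult_pow t) = t.
Proof. by rewrite mdeg_xpow. Qed.

Lemma xpenult_pow_last t : xpenult_pow t xlast = 0.
Proof. by rewrite ffunE /= gtn_eqF. Qed.

Lemma mem_xpenult_pow_mingen N :
  mingen I N -> 0 < N xlast -> I (xpenult_pow (mdeg N)).
Proof.
move=> hN hlast; apply: (mem_revlex_last HI hN).
  by rewrite mdeg_xpenult_pow.
by rewrite xpenult_pow_last.
Qed.

Variable f : nat.
Hypothesis Hf : I (xpenult_pow f).
Hypothesis Hmin : forall t, I (xpenult_pow t) -> f <= t.

Lemma mingen_xpenult_pow : mingen I (xpenult_pow f).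
Proof.
split=> // N hN hdvd; have hNpow := mdvd_xpowP (leqW (ltnSn n)) hdvd.
have := mdvd_mdeg hdvd; rewrite mdeg_xpenult_pow => hle.
have := Hmin (eq_ind _ I hN _ hNpow) => hge.
by rewrite hNpow; congr xpow; apply/eqP; rewrite eqn_leq hle hge.
Qed.

Lemma mem_mdeg_eq_last0 M : mdeg M = f -> M xlast = 0 -> I M.
Proof.
(* Either M >revlex x_{n-1}^f, or x_{n-1}^f divides M. *)
move=> hM hlast; case: (ltnP (M xpenult) f) => hpen.
  case: HI => _ harl; apply: (harl M _ mingen_xpenult_pow).
    by rewrite mdeg_xpenult_pow.
  right; split; first by rewrite mdeg_xpenult_pow.
  exists xpenult; split; first by rewrite ffunE /= inordK ?eqxx.
  move=> t; rewrite inordK // => hnt; rewrite (_ : t = xlast) ?hlast ?xpenult_pow_last //.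
  by apply: val_inj => /=; have := ltn_ord t; lia.
apply: (ideal_mdvd HI Hf) => i; rewrite ffunE; case: eqP => [hi|_] //.
by rewrite (_ : i = xpenult) //; apply: val_inj => /=; rewrite inordK.
Qed.

Lemma mem_last0 d M : f <= d -> mdeg M = d -> M xlast = 0 -> I M.
Proof.
elim: d M => [|d IH] M hfd hM hlast; first by apply: mem_mdeg_eq_last0; lia.
case: (leqP f d) => hfd'; last by apply: mem_mdeg_eq_last0; lia.
have [i hi] : exists i, 0 < M i by apply: mdeg_gt0; rewrite hM.
apply: (ideal_mdvd HI (a := divX i M)) (mdvd_divX _ _).
apply: IH => //; first by rewrite mdeg_divX // hM.
by rewrite divX_coord hlast.
Qed.

Lemma hilb_add_var_ge d : f <= d -> hilb (add_var I n.+1) d%:Z = 0%R.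
Proof.
move=> hfd; congr Posz; apply: count_deg_eq0 => M hM hadd; apply: (hadd); left.
apply: (mem_last0 hfd hM); apply/eqP; rewrite -leqn0 leqNgt; apply/negP => hpos.
by apply: hadd; right; exists xlast.
Qed.

Lemma hilb_add_var_lt d : d < f -> (0 < hilb (add_var I n.+1) d%:Z)%R.
Proof.
move=> hdf; rewrite ltz_nat; apply: (count_deg_gt0 (m := xpenult_pow d)).
  exact: mdeg_xpenult_pow.
move=> [/Hmin | [i [hi]]]; first lia.
by rewrite (_ : i = xlast) ?xpenult_pow_last //; apply: val_inj.
Qed.

Lemma ngens_maxvar_lt d : d < f -> ngens_maxvar I n.+2 d = 0.
Proof.
move=> hdf; apply: count_deg_eq0 => M hM [hgen [/eqP hmax _]].
rewrite maxvar_last in hmax; have := Hmin (mem_xpenult_pow_mingen hgen hmax).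
by rewrite hM; lia.
Qed.

End PenultimateVariable.

Local Open Scope ring_scope.

Theorem corollary3p5 (n : nat) (I : mon n -> Prop) (Mw : mon n) :
  (2 <= n)%N -> almost_revlex I -> last_gen I Mw -> maxvar Mw = n ->
  exists f : nat,
    (* f = f_{n-1}(0) = min { t : x_{n-1}^t \in I } *)
    (I (xpow n n.-2 f) /\ forall t : nat, I (xpow n n.-2 t) -> (f <= t)%N) /\
    (* (1) *)
    (forall d : nat, (f <= d)%N ->
       hilb I (d%:Z - 1) - hilb I d%:Z
         = (count_deg (fun M => mingen I M /\ maxvar M = n /\ mdeg M = d) d)%:Z
       /\ hilb I d%:Z <= hilb I (d%:Z - 1)) /\
    (* (2) *)
    (forall d : nat, (d < f)%N -> hilb I (d%:Z - 1) < hilb I d%:Z) /\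
    (* (3) *)
    (hilb I f%:Z <= hilb I (f%:Z - 1) /\
     forall d : nat, hilb I d%:Z <= hilb I (d%:Z - 1) -> (f <= d)%N) /\
    (* (4) *)
    (forall d : int, hilb (add_var I n.-1) d = Num.max 0 (hilb I d - hilb I (d - 1))).
Proof.
case: n I Mw => [|[|n]] // I Mw _ HI [hMw _] /eqP hmax /=.
rewrite maxvar_last in hmax.
have hex : exists t, `[< I (xpow n.+2 n t) >].
  by exists (mdeg Mw); apply/asboolP; apply: mem_xpenult_pow_mingen hMw hmax.
case: (ex_minnP hex) => f /asboolP hf hmin'.
have hmin t : I (xpow n.+2 n t) -> (f <= t)%N by move=> ht; apply/hmin'/asboolP.
have step := hilb_step HI.
have drop_ge d : (f <= d)%N -> hilb I (d%:Z - 1) - hilb I d%:Z = (ngens_maxvar I n.+2 d)%:Z.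
  by move=> hd; have := step d; rewrite (hilb_add_var_ge HI hf hmin hd); lia.
have rise_lt d : (d < f)%N -> hilb I (d%:Z - 1) < hilb I d%:Z.
  move=> hd; have := step d; have := hilb_add_var_lt hmin hd.
  by rewrite (ngens_maxvar_lt HI hmin) //; lia.
exists f; split; first by [].
split; first by move=> d hd; split; [exact: drop_ge | rewrite -subr_ge0 drop_ge].
split; first exact: rise_lt.
split.
  split; first by rewrite -subr_ge0 drop_ge.
  by move=> d; apply: contraTT; rewrite -ltnNge -ltNge; apply: rise_lt.
case=> [d|d]; last by rewrite !hilb_neg.
case: (leqP f d) => hd.
  by rewrite (hilb_add_var_ge HI hf hmin hd) max_l //; have := drop_ge d hd; lia.
have hpos := hilb_add_var_lt hmin hd; have := step d.
by rewrite (ngens_maxvar_lt HI hmin) // => hstep; rewrite max_r; lia.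
Qed.
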